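(* Let $\Psi\subset\mathrm{Cl}^+(3)$ be the following set of 20 spinors (forming an $A_4$ root system inside the $H_4$ root system $2I$), writing $e_{ij}=e_ie_j$ and $\sigma=\frac{1-\sqrt5}{2}$: $\pm1$; $\pm\tfrac12(\tau e_{12}+\sigma e_{13}+e_{23})$; $\pm\tfrac12(e_{12}-\tau e_{13}+\sigma e_{23})$; $\pm\tfrac12(\sigma e_{12}-e_{13}-\tau e_{23})$; and $\tfrac12(\epsilon_1+\epsilon_2B)$ for all signs $\epsilon_1,\epsilon_2\in\{\pm1\}$ and $B\in\{\tau e_{12}+\sigma e_{23},\ \sigma e_{13}+\tau e_{23},\ \sigma e_{12}-\tau e_{13}\}$. Let $C=2I\setminus\Psi$ (100 elements). Then both $\Psi$ and $C$ are invariant under the reflection group $A_4$ generated by the reflections $s_R(X)=-R\tilde XR$, $R\in\Psi$.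
   Context: $\mathrm{Cl}(3)$ is the real Clifford algebra of Euclidean $\mathbb{R}^3$ with orthonormal basis $e_1,e_2,e_3$ ($e_i^2=1$, $e_ie_j=-e_je_i$ for $i\neq j$). The even subalgebra $\mathrm{Cl}^+(3)$ is spanned by $1,e_2e_3,e_3e_1,e_1e_2$ (spinors). Reversal $\tilde{\ }$ reverses the order of vector factors. The spinor inner product $(R_1,R_2)=\tfrac12(R_1\tilde R_2+R_2\tilde R_1)$ makes $\mathrm{Cl}^+(3)$ a 4D Euclidean space with orthonormal basis $1,e_2e_3,e_3e_1,e_1e_2$; for a unit spinor $R$, $s_R(X)=-R\tilde XR$ is the reflection in the hyperplane orthogonal to $R$. Let $\tau=\frac{1+\sqrt5}{2}$. The $H_3$ simple roots are $a_1=e_2$, $a_2=\tfrac12(-\tau e_1-e_2-(\tau-1)e_3)$, $a_3=e_1$. The binary icosahedral group $2I$ is the set of all products of an even number of factors from $\{a_1,a_2,a_3\}$ (order 120); viewed as 120 vectors in the 4D spinor space it is the $H_4$ root system (600-cell). *)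

(* The real Clifford algebra Cl(3) of Euclidean R^3, modelled
   over an arbitrary real closed field R (the statement is purely algebraic). *)
From HB Require Import structures.
From mathcomp Require Import all_boot all_order all_algebra.
Set Implicit Arguments. Unset Strict Implicit. Unset Printing Implicit Defensive.
Import Order.TTheory GRing.Theory Num.Theory.
Local Open Scope ring_scope.

Notation mv R := {ffun {set 'I_3} -> R^o}.

Section Cl3.
Variable R : rcfType.

(* A multivector: coefficients on the basis blades e_A, A ⊆ {0,1,2}
   (index i stands for e_(i+1)); e_A is the increasing product of the e_i, i ∈ A. *)

(* sign of e_A e_B = sign * e_(A Δ B), with e_i^2 = 1, e_i e_j = - e_j e_i *)
Definition bsign (A B : {set 'I_3}) : R :=
  (-1) ^+ #|[set p : 'I_3 * 'I_3 | (p.1 \in A) && (p.2 \in B) && (p.2 < p.1)%N]|.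

Definition gp (X Y : mv R) : mv R :=
  [ffun K : {set 'I_3} => \sum_(A : {set 'I_3}) \sum_(B : {set 'I_3} | (A :\: B) :|: (B :\: A) == K)
              bsign A B * X A * Y B].

Definition rev (X : mv R) : mv R :=
  [ffun A : {set 'I_3} => (-1) ^+ ('C(#|A|, 2)) * X A].

Definition blade (A : {set 'I_3}) : mv R := [ffun B : {set 'I_3} => (B == A)%:R].
Definition one : mv R := blade set0.
Definition e (i : 'I_3) : mv R := blade [set i].

Definition e1 : mv R := e (@Ordinal 3 0 isT).
Definition e2 : mv R := e (@Ordinal 3 1 isT).
Definition e3 : mv R := e (@Ordinal 3 2 isT).
Definition e12 : mv R := gp e1 e2.
Definition e13 : mv R := gp e1 e3.
Definition e23 : mv R := gp e2 e3.

Definition tau : R := (1 + Num.sqrt 5) / 2.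
Definition sigma : R := (1 - Num.sqrt 5) / 2.

(* H3 simple roots *)
Definition a1 : mv R := e2.
Definition a2 : mv R := (1/2 : R) *: (- (tau *: e1) - e2 - (tau - 1) *: e3).
Definition a3 : mv R := e1.
Definition a (i : 'I_3) : mv R :=
  match val i with 0 => a1 | 1 => a2 | _ => a3 end.

Definition prodw (w : seq 'I_3) : mv R := foldr (fun i acc => gp (a i) acc) one w.

Definition in2I (X : mv R) : Prop := exists w : seq 'I_3, ~~ odd (size w) /\ X = prodw w.

Definition half : R := 1 / 2.

Definition Bs : seq (mv R) :=
  [:: tau *: e12 + sigma *: e23; sigma *: e13 + tau *: e23; sigma *: e12 - tau *: e13].

Definition Psi : seq (mv R) :=
  [seq s *: v | s <- [:: 1; -1 : R], v <- [:: one;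
       half *: (tau *: e12 + sigma *: e13 + e23);
       half *: (e12 - tau *: e13 + sigma *: e23);
       half *: (sigma *: e12 - e13 - tau *: e23)]]
  ++ [seq half *: (ss.1 *: one + ss.2 *: B)
       | ss <- [seq (s1, s2) | s1 <- [:: 1; -1 : R], s2 <- [:: 1; -1 : R]], B <- Bs].

Definition inC (X : mv R) : Prop := in2I X /\ X \notin Psi.

Definition refl (Rs X : mv R) : mv R := - gp (gp Rs (rev X)) Rs.

(* action of an element of the group generated by the s_R, R in Psi,
   given as a word ws of reflecting spinors: s_{ws_0} o s_{ws_1} o ... *)
Definition actw (ws : seq (mv R)) (X : mv R) : mv R := foldr refl X ws.

End Cl3.

From Pilot Require Import Defs.
From HB Require Import structures.
From mathcomp Require Import all_boot all_order all_algebra ring.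
Set Implicit Arguments. Unset Strict Implicit. Unset Printing Implicit Defensive.
Import Order.TTheory GRing.Theory Num.Theory.
Local Open Scope ring_scope.

(* All the spinors involved have coefficients in Q(tau), so the facts needed
   about Psi are finite computations in Cl(3) over Q(tau): Psi is closed under
   every s_R with R in Psi, every R in Psi satisfies R ~R = ~R R = 1, and every
   R in Psi is an explicit even word in a_1, a_2, a_3.  They are checked by
   evaluation over Q(tau) = Q x Q and transported to Cl(3) over R along the
   ring morphism (x, y) |-> x + y tau.
   For C: since a_i is a vector, ~(a_i1 ... a_in) = a_in ... a_i1, so 2I is
   closed under reversal; it contains -1 = (e_2 e_1)^2, hence
   s_R(X) = (-1) R ~X R stays in 2I.  And s_R is an involution preserving Psi,
   so it cannot move a point outside Psi into Psi. *)

(* The coefficient of the blade e_A, A = [set i | a_i], sits at [get u a0 a1 a2]. *)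
Notation v8 T := (T * T * T * T * T * T * T * T)%type.

Definition get T (u : v8 T) (a0 a1 a2 : bool) : T :=
  let '(x0, x1, x2, x3, x4, x5, x6, x7) := u in
  match a0, a1, a2 with
  | false, false, false => x0 | true, false, false => x1
  | false, true, false => x2  | true, true, false => x3
  | false, false, true => x4  | true, false, true => x5
  | false, true, true => x6   | true, true, true => x7
  end.

Definition mkv T (f : bool -> bool -> bool -> T) : v8 T :=
  (f false false false, f true false false, f false true false, f true true false,
   f false false true, f true false true, f false true true, f true true true).

Lemma get_mkv T (f : bool -> bool -> bool -> T) a0 a1 a2 : get (mkv f) a0 a1 a2 = f a0 a1 a2.
Proof. by case: a0; case: a1; case: a2. Qed.

Lemma mkv_get T (u : v8 T) : mkv (get u) = u.
Proof. by case: u => [[[[[[[? ?] ?] ?] ?] ?] ?] ?]. Qed.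

Lemma eq_mkv T (f g : bool -> bool -> bool -> T) :
  (forall a0 a1 a2, f a0 a1 a2 = g a0 a1 a2) -> mkv f = mkv g.
Proof. by move=> fg; rewrite /mkv !fg. Qed.

Definition map8 T U (f : T -> U) (u : v8 T) : v8 U := mkv (fun a0 a1 a2 => f (get u a0 a1 a2)).

Section CliffordTable.
Variables (T : Type) (add mul : T -> T -> T) (opp : T -> T).

Definition sum8 (f : bool -> bool -> bool -> T) : T :=
  add (add (add (f true true true) (f true true false))
           (add (f true false true) (f true false false)))
      (add (add (f false true true) (f false true false))
           (add (f false false true) (f false false false))).

Lemma eq_sum8 (f g : bool -> bool -> bool -> T) :
  (forall a0 a1 a2, f a0 a1 a2 = g a0 a1 a2) -> sum8 f = sum8 g.
Proof. by move=> fg; rewrite /sum8 !fg. Qed.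

(* The parity of #|{(i, j) | i \in A, j \in B, j < i}|, i.e. e_A e_B = ± e_(A Δ B). *)
Definition blade_sign (a0 a1 a2 b0 b1 b2 : bool) : bool :=
  (a1 && b0) (+) (a2 && b0) (+) (a2 && b1).

Definition opp_if (b : bool) (x : T) : T := if b then opp x else x.

Definition gp8 (u v : v8 T) : v8 T :=
  mkv (fun k0 k1 k2 => sum8 (fun a0 a1 a2 =>
    opp_if (blade_sign a0 a1 a2 (a0 (+) k0) (a1 (+) k1) (a2 (+) k2))
      (mul (get u a0 a1 a2) (get v (a0 (+) k0) (a1 (+) k1) (a2 (+) k2))))).

Definition add8 (u v : v8 T) : v8 T :=
  mkv (fun a0 a1 a2 => add (get u a0 a1 a2) (get v a0 a1 a2)).
Definition opp8 (u : v8 T) : v8 T := map8 opp u.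
Definition scale8 (s : T) (u : v8 T) : v8 T := map8 (mul s) u.

(* (-1)^('C(#|A|, 2)) is -1 exactly when A has at least two elements. *)
Definition rev8 (u : v8 T) : v8 T :=
  mkv (fun a0 a1 a2 => opp_if [|| a0 && a1, a0 && a2 | a1 && a2] (get u a0 a1 a2)).

Definition blade8 (zero one : T) (a0 a1 a2 : bool) : v8 T :=
  mkv (fun b0 b1 b2 => if [&& b0 == a0, b1 == a1 & b2 == a2] then one else zero).

End CliffordTable.

Section CliffordTableMorphism.
Variables (T U : Type) (addT mulT : T -> T -> T) (oppT : T -> T).
Variables (addU mulU : U -> U -> U) (oppU : U -> U) (f : T -> U).
Hypotheses (fD : forall x y, f (addT x y) = addU (f x) (f y))
           (fM : forall x y, f (mulT x y) = mulU (f x) (f y))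
           (fN : forall x, f (oppT x) = oppU (f x)).

Lemma map_opp_if b x : f (opp_if oppT b x) = opp_if oppU b (f x).
Proof. by case: b. Qed.

Lemma map8_gp8 u v :
  map8 f (gp8 addT mulT oppT u v) = gp8 addU mulU oppU (map8 f u) (map8 f v).
Proof.
by apply: eq_mkv => k0 k1 k2; rewrite get_mkv /sum8 !fD !map_opp_if !fM !get_mkv.
Qed.

Lemma map8_add8 u v : map8 f (add8 addT u v) = add8 addU (map8 f u) (map8 f v).
Proof. by apply: eq_mkv => a0 a1 a2; rewrite !get_mkv fD. Qed.

Lemma map8_opp8 u : map8 f (opp8 oppT u) = opp8 oppU (map8 f u).
Proof. by apply: eq_mkv => a0 a1 a2; rewrite !get_mkv fN. Qed.

Lemma map8_scale8 s u : map8 f (scale8 mulT s u) = scale8 mulU (f s) (map8 f u).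
Proof. by apply: eq_mkv => a0 a1 a2; rewrite !get_mkv fM. Qed.

Lemma map8_rev8 u : map8 f (rev8 oppT u) = rev8 oppU (map8 f u).
Proof. by apply: eq_mkv => a0 a1 a2; rewrite !get_mkv map_opp_if. Qed.

Lemma map8_blade8 zero one a0 a1 a2 :
  map8 f (blade8 zero one a0 a1 a2) = blade8 (f zero) (f one) a0 a1 a2.
Proof. by apply: eq_mkv => b0 b1 b2; rewrite !get_mkv; case: ifP. Qed.

End CliffordTableMorphism.

Section CliffordTableRing.
Variable T : comPzRingType.
Notation gp8T := (gp8 +%R *%R (@GRing.opp T)).
Notation opp8T := (opp8 (@GRing.opp T)).
Notation rev8T := (rev8 (@GRing.opp T)).
Notation one8T := (blade8 (0 : T) 1 false false false).

Lemma gp8A (u v w : v8 T) : gp8T (gp8T u v) w = gp8T u (gp8T v w).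
Proof. rewrite /gp8 /mkv /sum8 /=; congr (_, _, _, _, _, _, _, _); ring. Qed.

Lemma rev8_gp8 (u v : v8 T) : rev8T (gp8T u v) = gp8T (rev8T v) (rev8T u).
Proof. rewrite /rev8 /gp8 /mkv /sum8 /=; congr (_, _, _, _, _, _, _, _); ring. Qed.

Lemma rev8K (u : v8 T) : rev8T (rev8T u) = u.
Proof. by rewrite -[RHS]mkv_get /rev8 /mkv /= !opprK. Qed.

Lemma rev8N (u : v8 T) : rev8T (opp8T u) = opp8T (rev8T u).
Proof. by []. Qed.

Lemma gp8_1l (u : v8 T) : gp8T one8T u = u.
Proof. rewrite -[RHS]mkv_get /gp8 /blade8 /mkv /sum8 /=; congr (_, _, _, _, _, _, _, _); ring. Qed.

Lemma gp8_1r (u : v8 T) : gp8T u one8T = u.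
Proof. rewrite -[RHS]mkv_get /gp8 /blade8 /mkv /sum8 /=; congr (_, _, _, _, _, _, _, _); ring. Qed.

Lemma gp8Nl (u v : v8 T) : gp8T (opp8T u) v = opp8T (gp8T u v).
Proof. rewrite /gp8 /opp8 /map8 /mkv /sum8 /=; congr (_, _, _, _, _, _, _, _); ring. Qed.

Lemma gp8Nr (u v : v8 T) : gp8T u (opp8T v) = opp8T (gp8T u v).
Proof. rewrite /gp8 /opp8 /map8 /mkv /sum8 /=; congr (_, _, _, _, _, _, _, _); ring. Qed.

End CliffordTableRing.

Definition i0 : 'I_3 := @Ordinal 3 0 isT.
Definition i1 : 'I_3 := @Ordinal 3 1 isT.
Definition i2 : 'I_3 := @Ordinal 3 2 isT.

Definition bset (a0 a1 a2 : bool) : {set 'I_3} := [set i : 'I_3 | nth false [:: a0; a1; a2] i].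

Lemma in_bset a0 a1 a2 i : (i \in bset a0 a1 a2) = nth false [:: a0; a1; a2] i.
Proof. by rewrite inE. Qed.

Lemma bsetE (A : {set 'I_3}) : A = bset (i0 \in A) (i1 \in A) (i2 \in A).
Proof.
apply/setP => i; rewrite in_bset.
by case: i => [[|[|[|n]]] lti] //=; congr (_ \in A); apply: val_inj.
Qed.

Lemma eq_bset a0 a1 a2 b0 b1 b2 :
  (bset a0 a1 a2 == bset b0 b1 b2) = [&& a0 == b0, a1 == b1 & a2 == b2].
Proof.
apply/eqP/and3P => [/setP eqab | [/eqP-> /eqP-> /eqP->]] //.
by have := eqab i0; have := eqab i1; have := eqab i2; rewrite !in_bset /= => -> -> ->.
Qed.

Lemma bset_symdiff a0 a1 a2 b0 b1 b2 :
  (bset a0 a1 a2 :\: bset b0 b1 b2) :|: (bset b0 b1 b2 :\: bset a0 a1 a2) =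
  bset (a0 (+) b0) (a1 (+) b1) (a2 (+) b2).
Proof.
apply/setP => i; rewrite !inE.
by case: i => [[|[|[|n]]] lti] //=; case: a0; case: a1; case: a2; case: b0; case: b1; case: b2.
Qed.

Lemma card_bset a0 a1 a2 : #|bset a0 a1 a2| = (a0 + a1 + a2)%N.
Proof.
rewrite -sum1_card big_mkcond /= !big_ord_recl big_ord0 !in_bset /=.
by case: a0; case: a1; case: a2.
Qed.

Lemma sum_subsets3 (V : nmodType) (F : {set 'I_3} -> V) :
  \sum_(A : {set 'I_3}) F A = sum8 +%R (fun a0 a1 a2 => F (bset a0 a1 a2)).
Proof.
rewrite (reindex (fun x : bool * bool * bool => bset x.1.1 x.1.2 x.2)) /=; last first.
  exists (fun A : {set 'I_3} => (i0 \in A, i1 \in A, i2 \in A)) => [[[a0 a1] a2] _ | A _] /=.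
    by rewrite !in_bset.
  by rewrite -bsetE.
rewrite -(pair_big xpredT xpredT (fun (x : bool * bool) a2 => F (bset x.1 x.2 a2))) /=.
rewrite -(pair_big xpredT xpredT (fun a0 a1 => \sum_(a2 : bool) F (bset a0 a1 a2))) /=.
by rewrite !big_bool.
Qed.

Section MultivectorTable.
Variable R : rcfType.
Notation gp8R := (gp8 +%R *%R (@GRing.opp R)).
Notation add8R := (add8 (@GRing.add R)).
Notation opp8R := (opp8 (@GRing.opp R)).
Notation scale8R := (scale8 (@GRing.mul R)).
Notation rev8R := (rev8 (@GRing.opp R)).
Notation one8R := (blade8 (0 : R) 1 false false false).

Lemma opp_ifE b (x : R) : opp_if -%R b x = (-1) ^+ b * x.
Proof. by case: b; rewrite ?mulN1r ?mul1r. Qed.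

Lemma bsign_bset a0 a1 a2 b0 b1 b2 :
  bsign R (bset a0 a1 a2) (bset b0 b1 b2) = (-1) ^+ blade_sign a0 a1 a2 b0 b1 b2.
Proof.
rewrite /bsign; set S := [set p : 'I_3 * 'I_3 | _].
have -> : #|S| = ((a1 && b0) + (a2 && b0) + (a2 && b1))%N.
  rewrite -sum1_card big_mkcond.
  rewrite (eq_bigr (fun p => if (p.1, p.2) \in S then 1%N else 0%N)) //=; last by case.
  rewrite -(pair_bigA _ (fun i j => if (i, j) \in S then 1%N else 0%N)).
  rewrite /S !big_ord_recl !big_ord0 /= !inE /=; clear S.
  by case: a0; case: a1; case: a2; case: b0; case: b1; case: b2.
by rewrite -signr_odd !oddD !oddb.
Qed.

Definition mv_of8 (u : v8 R) : mv R :=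
  [ffun A : {set 'I_3} => get u (i0 \in A) (i1 \in A) (i2 \in A)].
Definition v8_of_mv (X : mv R) : v8 R := mkv (fun a0 a1 a2 => X (bset a0 a1 a2)).

Lemma mv_of8_bset u a0 a1 a2 : mv_of8 u (bset a0 a1 a2) = get u a0 a1 a2.
Proof. by rewrite ffunE !in_bset. Qed.

Lemma v8_of_mvK : cancel v8_of_mv mv_of8.
Proof. by move=> X; apply/ffunP => A; rewrite ffunE get_mkv -bsetE. Qed.

Lemma mv_of8M u v : mv_of8 (gp8R u v) = gp (mv_of8 u) (mv_of8 v).
Proof.
apply/ffunP => K; rewrite [K]bsetE; move: (i0 \in K) (i1 \in K) (i2 \in K) => k0 k1 k2.
rewrite mv_of8_bset get_mkv ffunE sum_subsets3; apply: eq_sum8 => a0 a1 a2.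
rewrite (big_pred1 (bset (a0 (+) k0) (a1 (+) k1) (a2 (+) k2))) => [|B /=]; last first.
  rewrite [B]bsetE bset_symdiff !eq_bset.
  move: (i0 \in B) (i1 \in B) (i2 \in B) => b0 b1 b2.
  by case: a0; case: a1; case: a2; case: b0; case: b1; case: b2; case: k0; case: k1; case: k2.
by rewrite bsign_bset !mv_of8_bset opp_ifE mulrA.
Qed.

Lemma mv_of8D u v : mv_of8 (add8R u v) = mv_of8 u + mv_of8 v.
Proof. by apply/ffunP => A; rewrite !ffunE get_mkv. Qed.

Lemma mv_of8N u : mv_of8 (opp8R u) = - mv_of8 u.
Proof. by apply/ffunP => A; rewrite !ffunE get_mkv. Qed.

Lemma mv_of8Z s u : mv_of8 (scale8R s u) = s *: mv_of8 u.
Proof. by apply/ffunP => A; rewrite !ffunE get_mkv. Qed.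

Lemma mv_of8_rev u : mv_of8 (rev8R u) = Defs.rev (mv_of8 u).
Proof.
apply/ffunP => K; rewrite [K]bsetE; move: (i0 \in K) (i1 \in K) (i2 \in K) => k0 k1 k2.
rewrite [RHS]ffunE !mv_of8_bset get_mkv card_bset opp_ifE -[(-1) ^+ 'C(_, _)]signr_odd.
by case: k0; case: k1; case: k2.
Qed.

Lemma mv_of8_blade a0 a1 a2 : mv_of8 (blade8 0 1 a0 a1 a2) = blade R (bset a0 a1 a2).
Proof.
apply/ffunP => K; rewrite [K]bsetE; move: (i0 \in K) (i1 \in K) (i2 \in K) => k0 k1 k2.
rewrite mv_of8_bset [RHS]ffunE get_mkv eq_bset.
by case: a0; case: a1; case: a2; case: k0; case: k1; case: k2.
Qed.

Lemma mv_of8_one : mv_of8 one8R = Defs.one R.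
Proof. by rewrite mv_of8_blade /Defs.one [set0]bsetE !inE. Qed.

Lemma gpA (X Y Z : mv R) : gp (gp X Y) Z = gp X (gp Y Z).
Proof. by rewrite -[X]v8_of_mvK -[Y]v8_of_mvK -[Z]v8_of_mvK -!mv_of8M gp8A. Qed.

Lemma rev_gp (X Y : mv R) : Defs.rev (gp X Y) = gp (Defs.rev Y) (Defs.rev X).
Proof. by rewrite -[X]v8_of_mvK -[Y]v8_of_mvK -!mv_of8_rev -!mv_of8M -mv_of8_rev rev8_gp8. Qed.

Lemma revK : involutive (@Defs.rev R).
Proof. by move=> X; rewrite -[X]v8_of_mvK -!mv_of8_rev rev8K. Qed.

Lemma revN (X : mv R) : Defs.rev (- X) = - Defs.rev X.
Proof. by rewrite -[X]v8_of_mvK -mv_of8N -!mv_of8_rev -mv_of8N rev8N. Qed.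

Lemma gp1l (X : mv R) : gp (Defs.one R) X = X.
Proof. by rewrite -[X]v8_of_mvK -mv_of8_one -mv_of8M gp8_1l. Qed.

Lemma gp1r (X : mv R) : gp X (Defs.one R) = X.
Proof. by rewrite -[X]v8_of_mvK -mv_of8_one -mv_of8M gp8_1r. Qed.

Lemma gpNl (X Y : mv R) : gp (- X) Y = - gp X Y.
Proof. by rewrite -[X]v8_of_mvK -[Y]v8_of_mvK -mv_of8N -!mv_of8M gp8Nl mv_of8N. Qed.

Lemma gpNr (X Y : mv R) : gp X (- Y) = - gp X Y.
Proof. by rewrite -[X]v8_of_mvK -[Y]v8_of_mvK -mv_of8N -!mv_of8M gp8Nr mv_of8N. Qed.

Lemma reflK (r : mv R) : gp r (Defs.rev r) = Defs.one R -> gp (Defs.rev r) r = Defs.one R ->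
  involutive (refl r).
Proof.
move=> r_rr rr_r X; rewrite /refl revN !rev_gp revK gpNr gpNl opprK.
by rewrite -!gpA r_rr gp1l !gpA rr_r gp1r.
Qed.

End MultivectorTable.

(* [(x, y) : Qtau] stands for x + y tau, and tau ^ 2 = tau + 1 gives the product. *)
Notation Qtau := (rat * rat)%type.

Definition qadd (x y : Qtau) : Qtau := (x.1 + y.1, x.2 + y.2).
Definition qmul (x y : Qtau) : Qtau := (x.1 * y.1 + x.2 * y.2, x.1 * y.2 + x.2 * y.1 + x.2 * y.2).
Definition qopp (x : Qtau) : Qtau := (- x.1, - x.2).
Definition q0 : Qtau := (0, 0).
Definition q1 : Qtau := (1, 0).
Definition qhalf : Qtau := (2^-1, 0).
Definition qtau : Qtau := (0, 1).
Definition qsigma : Qtau := (1, -1).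

Notation gp8Q := (gp8 qadd qmul qopp).
Notation add8Q := (add8 qadd).
Notation opp8Q := (opp8 qopp).
Notation scale8Q := (scale8 qmul).
Notation rev8Q := (rev8 qopp).

Definition oneQ := blade8 q0 q1 false false false.
Definition e1Q := blade8 q0 q1 true false false.
Definition e2Q := blade8 q0 q1 false true false.
Definition e3Q := blade8 q0 q1 false false true.
Definition e12Q := gp8Q e1Q e2Q.
Definition e13Q := gp8Q e1Q e3Q.
Definition e23Q := gp8Q e2Q e3Q.

Definition BsQ : seq (v8 Qtau) :=
  [:: add8Q (scale8Q qtau e12Q) (scale8Q qsigma e23Q);
      add8Q (scale8Q qsigma e13Q) (scale8Q qtau e23Q);
      add8Q (scale8Q qsigma e12Q) (opp8Q (scale8Q qtau e13Q))].

Definition PsiQ : seq (v8 Qtau) :=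
  [seq scale8Q s v | s <- [:: q1; qopp q1], v <- [:: oneQ;
      scale8Q qhalf (add8Q (add8Q (scale8Q qtau e12Q) (scale8Q qsigma e13Q)) e23Q);
      scale8Q qhalf (add8Q (add8Q e12Q (opp8Q (scale8Q qtau e13Q))) (scale8Q qsigma e23Q));
      scale8Q qhalf (add8Q (add8Q (scale8Q qsigma e12Q) (opp8Q e13Q))
                           (opp8Q (scale8Q qtau e23Q)))]]
  ++ [seq scale8Q qhalf (add8Q (scale8Q ss.1 oneQ) (scale8Q ss.2 B))
       | ss <- [seq (s1, s2) | s1 <- [:: q1; qopp q1], s2 <- [:: q1; qopp q1]], B <- BsQ].

Definition aQ (i : 'I_3) : v8 Qtau :=
  match val i with
  | 0 => e2Q
  | 1 => scale8Q qhalf (add8Q (add8Q (opp8Q (scale8Q qtau e1Q)) (opp8Q e2Q))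
                              (opp8Q (scale8Q (qadd qtau (qopp q1)) e3Q)))
  | _ => e1Q
  end.

Definition prodQ (w : seq 'I_3) : v8 Qtau := foldr (fun i acc => gp8Q (aQ i) acc) oneQ w.
Definition reflQ (r x : v8 Qtau) : v8 Qtau := opp8Q (gp8Q (gp8Q r (rev8Q x)) r).

(* The letter i_k stands for a_(k+1). *)
Definition Psi_words : seq (seq 'I_3) :=
 [:: [::]; [:: i0; i2; i1; i2; i0; i1; i0; i2];
  [:: i0; i1; i2; i1; i2; i0; i1; i2; i1; i0];
  [:: i2; i1; i2; i0; i1; i2; i0; i1; i0; i2; i1; i2]; [:: i0; i2; i0; i2];
  [:: i2; i0; i1; i2; i0; i1; i0; i2]; [:: i0; i1; i2; i1; i0; i2; i1; i2; i1; i0];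
  [:: i2; i1; i0; i2; i1; i2; i0; i1; i0; i2; i1; i2]; [:: i1; i2; i0; i2];
  [:: i0; i1; i2; i1; i2; i0; i1; i2; i1; i2]; [:: i1; i2; i0; i1; i0; i2; i1; i2];
  [:: i2; i0; i2; i1]; [:: i1; i2; i1; i2; i0; i1; i2; i1; i0; i1];
  [:: i2; i1; i0; i2; i1; i2; i0; i1]; [:: i0; i1];
  [:: i1; i2; i1; i0; i2; i1; i2; i1; i0; i1]; [:: i2; i1; i2; i0; i1; i2; i0; i1];
  [:: i1; i0]; [:: i0; i1; i2; i1; i0; i2; i1; i2; i1; i2];
  [:: i1; i0; i2; i1; i0; i2; i1; i2]].

Lemma PsiQ_refl_closed : all (fun r => all (fun x => reflQ r x \in PsiQ) PsiQ) PsiQ.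
Proof. by vm_compute. Qed.

Lemma PsiQ_unit :
  all (fun r => (gp8Q r (rev8Q r) == oneQ) && (gp8Q (rev8Q r) r == oneQ)) PsiQ.
Proof. by vm_compute. Qed.

Lemma PsiQ_words :
  all (fun r => has (fun w => ~~ odd (size w) && (prodQ w == r)) Psi_words) PsiQ.
Proof. by vm_compute. Qed.

Lemma rev8Q_aQ i : rev8Q (aQ i) = aQ i.
Proof. by case: i => [[|[|n]] ?]; apply/eqP; vm_compute. Qed.

Lemma prodQ_minus_one : prodQ [:: i0; i2; i0; i2] = opp8Q oneQ.
Proof. by apply/eqP; vm_compute. Qed.

Section Evaluation.
Variable R : rcfType.

Lemma tau_sqr : tau R ^+ 2 = tau R + 1.
Proof.
have sqrt5_sqr : Num.sqrt (5 : R) ^+ 2 = 5 by rewrite sqr_sqrtr // ler0n.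
have -> : ((1 + Num.sqrt (5 : R)) / 2) ^+ 2 = (1 + 2 * Num.sqrt 5 + Num.sqrt 5 ^+ 2) / 4.
  by field.
by rewrite sqrt5_sqr /tau; field.
Qed.

Definition qeval (x : Qtau) : R := ratr x.1 + ratr x.2 * tau R.

Lemma qevalD x y : qeval (qadd x y) = qeval x + qeval y.
Proof. rewrite /qeval /= !rmorphD /=; ring. Qed.

Lemma qevalN x : qeval (qopp x) = - qeval x.
Proof. rewrite /qeval /= !rmorphN /=; ring. Qed.

Lemma qevalM x y : qeval (qmul x y) = qeval x * qeval y.
Proof.
rewrite /qeval /= !rmorphD !rmorphM /=.
set u := ratr x.1; set v := ratr x.2; set u' := ratr y.1; set v' := ratr y.2.
have -> : (u + v * tau R) * (u' + v' * tau R) =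
          u * u' + (u * v' + v * u') * tau R + v * v' * tau R ^+ 2 by ring.
by rewrite tau_sqr; ring.
Qed.

Lemma qeval0 : qeval q0 = 0.
Proof. by rewrite /qeval /= rmorph0 mul0r addr0. Qed.

Lemma qeval1 : qeval q1 = 1.
Proof. by rewrite /qeval /= rmorph0 rmorph1 mul0r addr0. Qed.

Lemma qevalhalf : qeval qhalf = Defs.half R.
Proof. by rewrite /qeval /= rmorph0 mul0r addr0 fmorphV /Defs.half mul1r rmorphD rmorph1. Qed.

Lemma qevaltau : qeval qtau = tau R.
Proof. by rewrite /qeval /= rmorph0 rmorph1 mul1r add0r. Qed.

Lemma qevalsigma : qeval qsigma = sigma R.
Proof. by rewrite /qeval /= rmorph1 rmorphN1 /sigma /tau; field. Qed.

Definition mv_ofQ (u : v8 Qtau) : mv R := mv_of8 (map8 qeval u).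

Lemma mv_ofQM u v : mv_ofQ (gp8Q u v) = gp (mv_ofQ u) (mv_ofQ v).
Proof. by rewrite /mv_ofQ (map8_gp8 qevalD qevalM qevalN) mv_of8M. Qed.

Lemma mv_ofQD u v : mv_ofQ (add8Q u v) = mv_ofQ u + mv_ofQ v.
Proof. by rewrite /mv_ofQ (map8_add8 qevalD) mv_of8D. Qed.

Lemma mv_ofQN u : mv_ofQ (opp8Q u) = - mv_ofQ u.
Proof. by rewrite /mv_ofQ (map8_opp8 qevalN) mv_of8N. Qed.

Lemma mv_ofQZ s u : mv_ofQ (scale8Q s u) = qeval s *: mv_ofQ u.
Proof. by rewrite /mv_ofQ (map8_scale8 qevalM) mv_of8Z. Qed.

Lemma mv_ofQ_rev u : mv_ofQ (rev8Q u) = Defs.rev (mv_ofQ u).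
Proof. by rewrite /mv_ofQ (map8_rev8 qevalN) mv_of8_rev. Qed.

Lemma mv_ofQ_blade a0 a1 a2 : mv_ofQ (blade8 q0 q1 a0 a1 a2) = blade R (bset a0 a1 a2).
Proof. by rewrite /mv_ofQ map8_blade8 qeval0 qeval1 mv_of8_blade. Qed.

Lemma mv_ofQ_one : mv_ofQ oneQ = Defs.one R.
Proof. by rewrite mv_ofQ_blade /Defs.one [set0]bsetE !inE. Qed.

Lemma mv_ofQ_e1 : mv_ofQ e1Q = e1 R.
Proof. by rewrite mv_ofQ_blade /e1 /e [[set _]]bsetE !inE. Qed.

Lemma mv_ofQ_e2 : mv_ofQ e2Q = e2 R.
Proof. by rewrite mv_ofQ_blade /e2 /e [[set _]]bsetE !inE. Qed.

Lemma mv_ofQ_e3 : mv_ofQ e3Q = e3 R.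
Proof. by rewrite mv_ofQ_blade /e3 /e [[set _]]bsetE !inE. Qed.

Lemma mv_ofQ_e12 : mv_ofQ e12Q = e12 R. Proof. by rewrite mv_ofQM mv_ofQ_e1 mv_ofQ_e2. Qed.
Lemma mv_ofQ_e13 : mv_ofQ e13Q = e13 R. Proof. by rewrite mv_ofQM mv_ofQ_e1 mv_ofQ_e3. Qed.
Lemma mv_ofQ_e23 : mv_ofQ e23Q = e23 R. Proof. by rewrite mv_ofQM mv_ofQ_e2 mv_ofQ_e3. Qed.

(* The constants are generalized first: otherwise unification unfolds them into tuples. *)
Lemma Psi_mv_ofQ : Psi R = map mv_ofQ PsiQ.
Proof.
rewrite /PsiQ /BsQ /=.
move: mv_ofQ_one mv_ofQ_e12 mv_ofQ_e13 mv_ofQ_e23 qeval1 qevalhalf qevaltau qevalsigma.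
move: oneQ e12Q e13Q e23Q q1 qhalf qtau qsigma => o x12 x13 x23 c1 ch ct cs.
move=> ho h12 h13 h23 h1 hh ht hs.
by rewrite !(mv_ofQZ, mv_ofQD, mv_ofQN) qevalN ho h12 h13 h23 h1 hh ht hs.
Qed.

Lemma a_mv_ofQ i : a R i = mv_ofQ (aQ i).
Proof.
rewrite /a /aQ; case: (val i) => [|[|n]]; rewrite ?mv_ofQ_e1 ?mv_ofQ_e2 //.
move: mv_ofQ_e1 mv_ofQ_e2 mv_ofQ_e3 qeval1 qevalhalf qevaltau.
move: e1Q e2Q e3Q q1 qhalf qtau => x1 x2 x3 c1 ch ct h1 h2 h3 hc1 hh ht.
by rewrite !(mv_ofQZ, mv_ofQD, mv_ofQN) qevalD qevalN h1 h2 h3 hc1 hh ht.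
Qed.

End Evaluation.

Section Invariance.
Variable R : rcfType.
Implicit Types (r X Y : mv R) (w : seq 'I_3).

Lemma refl_mv_ofQ (r x : v8 Qtau) : refl (mv_ofQ R r) (mv_ofQ R x) = mv_ofQ R (reflQ r x).
Proof. by rewrite /reflQ mv_ofQN !mv_ofQM mv_ofQ_rev. Qed.

Lemma Psi_refl r X : r \in Psi R -> X \in Psi R -> refl r X \in Psi R.
Proof.
rewrite Psi_mv_ofQ => /mapP[r' r'Psi ->] /mapP[x' x'Psi ->].
by rewrite refl_mv_ofQ map_f // (allP (allP PsiQ_refl_closed r' r'Psi) x' x'Psi).
Qed.

Lemma Psi_unit r : r \in Psi R ->
  gp r (Defs.rev r) = Defs.one R /\ gp (Defs.rev r) r = Defs.one R.
Proof.
rewrite Psi_mv_ofQ => /mapP[r' r'Psi ->].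
have /andP[/eqP r_rr /eqP rr_r] := allP PsiQ_unit r' r'Psi.
by rewrite -!mv_ofQ_rev -!mv_ofQM r_rr rr_r mv_ofQ_one.
Qed.

Lemma prodw_mv_ofQ w : prodw R w = mv_ofQ R (prodQ w).
Proof. by elim: w => [|i w IHw] /=; rewrite ?mv_ofQ_one // mv_ofQM -IHw -a_mv_ofQ. Qed.

Lemma prodw_cat w1 w2 : prodw R (w1 ++ w2) = gp (prodw R w1) (prodw R w2).
Proof. by elim: w1 => [|i w1 IHw1] /=; rewrite ?gp1l // IHw1 gpA. Qed.

Lemma rev_one : Defs.rev (Defs.one R) = Defs.one R.
Proof.
by apply/ffunP => A; rewrite !ffunE; case: eqP => [->|_]; rewrite ?mulr0 // cards0 mul1r.
Qed.

Lemma rev_prodw w : Defs.rev (prodw R w) = prodw R (rev w).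
Proof.
elim: w => [|i w IHw]; first exact: rev_one.
rewrite /= rev_gp IHw a_mv_ofQ -mv_ofQ_rev rev8Q_aQ -a_mv_ofQ.
by rewrite rev_cons -cats1 prodw_cat /= gp1r.
Qed.

Lemma in2I_gp X Y : in2I X -> in2I Y -> in2I (gp X Y).
Proof.
move=> [w1 [even_w1 ->]] [w2 [even_w2 ->]]; exists (w1 ++ w2).
by rewrite size_cat oddD (negbTE even_w1) (negbTE even_w2) prodw_cat.
Qed.

Lemma in2I_rev X : in2I X -> in2I (Defs.rev X).
Proof. by move=> [w [even_w ->]]; exists (rev w); rewrite size_rev rev_prodw. Qed.

Lemma in2I_opp X : in2I X -> in2I (- X).
Proof.
have minus_one : in2I (- Defs.one R).
  by exists [:: i0; i2; i0; i2]; rewrite prodw_mv_ofQ prodQ_minus_one mv_ofQN mv_ofQ_one.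
by move=> /(in2I_gp minus_one); rewrite gpNl gp1l.
Qed.

Lemma Psi_sub_2I r : r \in Psi R -> in2I r.
Proof.
rewrite Psi_mv_ofQ => /mapP[r' r'Psi ->].
have /hasP[w _ /andP[even_w /eqP <-]] := allP PsiQ_words r' r'Psi.
by exists w; rewrite prodw_mv_ofQ.
Qed.

Lemma in2I_refl r X : r \in Psi R -> in2I X -> in2I (refl r X).
Proof.
move=> /Psi_sub_2I r2I X2I.
exact/in2I_opp/in2I_gp/r2I/in2I_gp/in2I_rev/X2I.
Qed.

Lemma inC_refl r X : r \in Psi R -> inC X -> inC (refl r X).
Proof.
move=> rPsi [X2I XnPsi]; split; first exact: in2I_refl.
have [r_rr rr_r] := Psi_unit rPsi.
by apply: contra XnPsi => /(Psi_refl rPsi); rewrite reflK.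
Qed.

End Invariance.

Theorem mainTheorem10 (R : rcfType) (ws : seq (mv R)) :
  all (fun r => r \in Psi R) ws ->
  (forall X : mv R, X \in Psi R -> actw ws X \in Psi R) /\
  (forall X : mv R, inC X -> inC (actw ws X)).
Proof.
elim: ws => [|r ws IHws] //= /andP[rPsi /IHws[Psi_ws C_ws]].
by split=> X hX; [exact: Psi_refl rPsi (Psi_ws X hX) | exact: inC_refl rPsi (C_ws X hX)].
Qed.
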